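(* Let $E$ be a finite environment with state set $S$, and let $\Sigma$ be a nonempty set of group strategies for $E$ that is restrictable and extendable. Then for every state $s\in S$ and every ATEL formula $\phi$: $E,s\models^\Sigma\phi$ iff for all points $(r,m)$ of $\mathcal I(E[S/I],\mathrm{comp}(\Sigma))$ with $r_e(m)=s$ we have $\mathcal I(E[S/I],\mathrm{comp}(\Sigma)),(r,m)\models\phi^*$; moreover, ''for all points'' may equivalently be replaced by ''for some point'' here (and such points exist).
   Context: Environments. Fix a finite set $Prop$ of atomic propositions and a finite set $Ags$ of agents. An environment is a tuple $E=\langle S,I,\{Act_i\}_{i\in Ags},\rightarrow,\{O_i\}_{i\in Ags},\pi\rangle$ where $S$ is a finite set of states, $I\subseteq S$ initial states, each $Act_i$ a finite nonempty action set, $Act=\prod_{i}Act_i$, $\rightarrow\subseteq S\times Act\times S$ serial (for all $s,a$ there is $t$ with $(s,a,t)\in\rightarrow$), $O_i:S\to L_i$ observation functions, $\pi:S\to 2^{Prop}$. $E[S/I]$ denotes $E$ with the set of initial states replaced by $S$. For states, $s\sim_i t$ iff $O_i(s)=O_i(t)$. Strategies. A strategy for agent $i$ is $\alpha_i:S\to 2^{Act_i}\setminus\{\emptyset\}$. A strategy for a group $G\subseteq Ags$ is a tuple $\alpha_G=(\alpha_i)_{i\in G}$; for $G=Ags$ it is a joint strategy. For $G'\subseteq G$, $(\alpha_G)_{G'}$ is the restriction to $G'$. The completion $\mathrm{comp}(\alpha_G)$ is the joint strategy agreeing with $\alpha_G$ on $G$ and with $\alpha_i(s)=Act_i$ for all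 $i\notin G$, $s\in S$; $\mathrm{comp}(\Sigma)=\{\mathrm{comp}(\alpha):\alpha\in\Sigma\}$. A set $\Sigma$ of group strategies (each for some group) is restrictable if for every $\alpha\in\Sigma$ for group $G$ and every $G'\subseteq G$, $\alpha_{G'}\in\Sigma$; it is extendable if for every strategy $\beta\in\Sigma$ for a group $G'$ and every $G\supseteq G'$ there exists $\alpha\in\Sigma$ for group $G$ with $\alpha_{G'}=\beta$. ATEL. Formulas: $\phi::=p\mid\neg\phi\mid\phi_1\lor\phi_2\mid\langle\langle G\rangle\rangle X\phi\mid\langle\langle G\rangle\rangle\Box\phi\mid\langle\langle G\rangle\rangle(\phi_1U\phi_2)\mid K_i\phi\mid D_G\phi\mid C_G\phi$ with $G\subseteq Ags$. A path is $\rho:\mathbb N\to S$ with, for each $k$, $(\rho(k),a,\rho(k+1))\in\rightarrow$ for some $a$; it is from $s$ if $\rho(0)=s$; it is consistent with a $G$-strategy $\alpha_G$ if for each $k$ there is $a$ with $(\rho(k),a,\rho(k+1))\in\rightarrow$ and $a_i\in\alpha_i(\rho(k))$ for all $i\in G$. Semantics $E,s\models^\Sigma\phi$: $p$ iff $p\in\pi(s)$; Boolean as usual; $\langle\langle G\rangle\rangle X\phi$ iff there is a $G$-strategy $\alpha_G\in\Sigma$ such that all paths $\rho$ from $s$ consistent with $\alpha_G$ satisfy $E,\rho(1)\models^\Sigma\phi$; $\langle\langle G\rangle\rangle\Box\phi$ iff there is such $\alpha_G\in\Sigma$ with $E,\rho(k)\models^\Sigma\phi$ for all $k$ on all such paths;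 $\langle\langle G\rangle\rangle(\phi U\psi)$ iff there is such $\alpha_G\in\Sigma$ such that on all such paths some $m$ has $E,\rho(m)\models^\Sigma\psi$ and $E,\rho(k)\models^\Sigma\phi$ for $k<m$; $K_i\phi$ iff $\phi$ holds at all $t$ with $t\sim_i s$; $D_G\phi$ iff $\phi$ holds at all $t$ with $(s,t)\in\bigcap_{i\in G}\sim_i$; $C_G\phi$ iff $\phi$ holds at all $t$ with $(s,t)\in(\bigcup_{i\in G}\sim_i)^*$. Strategy space. Given $E$ and a set $\Sigma'$ of joint strategies, $\mathcal I(E,\Sigma')$ is the set of runs $r:\mathbb N\to$ global states, each global state having components indexed by $e$ (a state of $S$), $i\in Ags$ (an element of $L_i$), and $\sigma(i)$ (a strategy of agent $i$), such that for all $m$, $i$: $r_e(0)\in I$ and $(r_{\sigma(i)}(0))_i\in\Sigma'$; $r_i(m)=O_i(r_e(m))$; $(r_e(m),a,r_e(m+1))\in\rightarrow$ for some $a$ with $a_j\in r_{\sigma(j)}(m)(r_e(m))$ for all $j$; $r_{\sigma(i)}(m+1)=r_{\sigma(i)}(m)$; with $\pi'(r,m)=\pi(r_e(m))$. Points are $(r,m)$; $(r,m)\sim_j(r',m')$ iff $r_j(m)=r'_j(m')$ for $j\in\{e\}\cup Ags\cup\sigma(Ags)$. Target logic $\mathrm{CTL^*K}(\{e\}\cup Ags\cup\sigma(Ags),Prop)$: formulas $p,\neg,\lor,A,X,U,D_G,C_G$ with $G\subseteq\{e\}\cup Ags\cup\sigma(Ags)$, interpreted at points: $A\psi$ iff $\psi$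 holds at $(r',m)$ for all runs $r'$ agreeing with $r$ up to $m$; $X,U$ as in LTL along $r$; $D_G\psi$ iff $\psi$ holds at all $(r',m')$ with $(r,m)\sim_j(r',m')$ for all $j\in G$ (all points if $G=\emptyset$); $C_G\psi$ iff $\psi$ holds at all points reachable by finitely many $\sim_j$ steps, $j\in G$. $K_j=D_{\{j\}}$, $\Box\psi=\neg(\mathit{true}\,U\neg\psi)$. Translation $\phi^*$: $p^*=p$, $(\neg\phi)^*=\neg\phi^*$, $(\phi_1\wedge\phi_2)^*=\phi_1^*\wedge\phi_2^*$, $(K_i\phi)^*=K_i\phi^*$, $(D_G\phi)^*=D_G\phi^*$, $(C_G\phi)^*=C_G\phi^*$, $(\langle\langle G\rangle\rangle X\phi)^*=\neg K_e\neg D_{\{e\}\cup\sigma(G)}X\phi^*$, $(\langle\langle G\rangle\rangle\Box\phi)^*=\neg K_e\neg D_{\{e\}\cup\sigma(G)}\Box\phi^*$, $(\langle\langle G\rangle\rangle(\phi_1U\phi_2))^*=\neg K_e\neg D_{\{e\}\cup\sigma(G)}(\phi_1^*U\phi_2^* )$. *)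

From Stdlib Require Import Relations.
From HB Require Import structures.
From mathcomp Require Import all_boot.
Set Implicit Arguments. Unset Strict Implicit. Unset Printing Implicit Defensive.

Record env (Ag Pr : finType) := Env {
  St : finType;
  Init : St -> Prop;
  Act : Ag -> finType;
  Act_ne : forall i, inhabited (Act i);
  Trans : St -> (forall i, Act i) -> St -> Prop;
  Trans_serial : forall s a, exists t, Trans s a t;
  Obs : Ag -> Type;
  obs : forall i, St -> Obs i;
  lab : St -> Pr -> bool
}.

Section Defs.
Variables (Ag Pr : finType).

Definition with_init (E : env Ag Pr) (I' : St E -> Prop) : env Ag Pr :=
  @Env Ag Pr (St E) I' (@Act _ _ E) (@Act_ne _ _ E) (@Trans _ _ E)
       (@Trans_serial _ _ E) (@Obs _ _ E) (@obs _ _ E) (@lab _ _ E).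

(* an agent strategy alpha_i : S -> 2^{Act_i}, as a characteristic function *)
Definition astrat (E : env Ag Pr) (i : Ag) := St E -> Act E i -> bool.
Definition astrat_ok (E : env Ag Pr) (i : Ag) (f : astrat E i) :=
  forall s, exists a, f s a.

(* a group strategy: a partial tuple; the group is the set of agents i with
   a component (Some _) *)
Definition gstrat (E : env Ag Pr) := forall i : Ag, option (astrat E i).
Definition grp (E : env Ag Pr) (al : gstrat E) : {set Ag} :=
  [set i | isSome (al i)].
Definition gstrat_ok (E : env Ag Pr) (al : gstrat E) :=
  forall i f, al i = Some f -> astrat_ok f.

Definition restrict (E : env Ag Pr) (al : gstrat E) (G' : {set Ag}) : gstrat E :=
  fun i => if i \in G' then al i else None.

Definition jstrat (E : env Ag Pr) := forall i : Ag, astrat E i.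
Definition comp (E : env Ag Pr) (al : gstrat E) : jstrat E :=
  fun i => match al i with Some f => f | None => fun _ _ => true end.
Definition compSet (E : env Ag Pr) (Sigma : gstrat E -> Prop) : jstrat E -> Prop :=
  fun be => exists al, Sigma al /\ comp al = be.

Definition restrictable (E : env Ag Pr) (Sigma : gstrat E -> Prop) :=
  forall al, Sigma al -> forall G' : {set Ag}, G' \subset grp al -> Sigma (restrict al G').
Definition extendable (E : env Ag Pr) (Sigma : gstrat E -> Prop) :=
  forall be, Sigma be -> forall G : {set Ag}, grp be \subset G ->
    exists al, Sigma al /\ grp al = G /\ restrict al (grp be) = be.

Definition consistent (E : env Ag Pr) (al : gstrat E) (rho : nat -> St E) :=
  forall k, exists a, Trans (rho k) a (rho k.+1) /\
    forall i f, al i = Some f -> f (rho k) (a i).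

Inductive atel :=
  | AP (p : Pr)
  | ANeg (f : atel)
  | AOr (f g : atel)
  | ACX (G : {set Ag}) (f : atel)
  | ACG (G : {set Ag}) (f : atel)
  | ACU (G : {set Ag}) (f g : atel)
  | AK (i : Ag) (f : atel)
  | AD (G : {set Ag}) (f : atel)
  | AC (G : {set Ag}) (f : atel).

Fixpoint asat (E : env Ag Pr) (Sigma : gstrat E -> Prop) (phi : atel)
  (s : St E) : Prop :=
  match phi with
  | AP p => lab s p
  | ANeg f => ~ asat Sigma f s
  | AOr f g => asat Sigma f s \/ asat Sigma g s
  | ACX G f => exists al, Sigma al /\ grp al = G /\
      forall rho, rho 0 = s -> consistent al rho -> asat Sigma f (rho 1)
  | ACG G f => exists al, Sigma al /\ grp al = G /\
      forall rho, rho 0 = s -> consistent al rho -> forall k, asat Sigma f (rho k)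
  | ACU G f g => exists al, Sigma al /\ grp al = G /\
      forall rho, rho 0 = s -> consistent al rho ->
        exists m, asat Sigma g (rho m) /\ forall k, k < m -> asat Sigma f (rho k)
  | AK i f => forall t, obs i s = obs i t -> asat Sigma f t
  | AD G f => forall t, (forall i, i \in G -> obs i s = obs i t) -> asat Sigma f t
  | AC G f => forall t,
      clos_refl_trans (St E) (fun u v => exists i, i \in G /\ obs i u = obs i v) s t ->
      asat Sigma f t
  end.

Record gstate (E : env Ag Pr) := GS {
  g_e : St E;
  g_l : forall i, Obs E i;
  g_s : jstrat E
}.
Arguments g_s {E}.
Arguments g_l {E}.
Arguments g_e {E}.
Definition run (E : env Ag Pr) := nat -> gstate E.

Definition is_run (E : env Ag Pr) (Sigma' : jstrat E -> Prop) (r : run E) : Prop :=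
  Init (g_e (r 0)) /\ Sigma' (g_s (r 0)) /\
  forall m,
    (forall i : Ag, g_l (r m) i = obs i (g_e (r m))) /\
    (exists a, Trans (g_e (r m)) a (g_e (r m.+1)) /\
        forall j : Ag, g_s (r m) j (g_e (r m)) (a j)) /\
    (forall i : Ag, g_s (r m.+1) i = g_s (r m) i).

Definition stratspace (E : env Ag Pr) (Sigma : gstrat E -> Prop) : run (@with_init E (fun _ => True)) -> Prop :=
  @is_run (@with_init E (fun _ => True)) (compSet Sigma).

Inductive tidx := ix_e | ix_a (i : Ag) | ix_s (i : Ag).

Definition eqloc (E : env Ag Pr) (j : tidx) (g g' : gstate E) : Prop :=
  match j with
  | ix_e => g_e g = g_e g'
  | ix_a i => g_l g i = g_l g' i
  | ix_s i => g_s g i = g_s g' i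
  end.

Inductive tform :=
  | TP (p : Pr)
  | TTrue
  | TNeg (f : tform)
  | TOr (f g : tform)
  | TA (f : tform)
  | TX (f : tform)
  | TU (f g : tform)
  | TD (G : tidx -> Prop) (f : tform)
  | TC (G : tidx -> Prop) (f : tform).

Fixpoint tsat (E : env Ag Pr) (sys : run E -> Prop) (phi : tform)
  (r : run E) (m : nat) : Prop :=
  match phi with
  | TP p => lab (g_e (r m)) p
  | TTrue => True
  | TNeg f => ~ tsat sys f r m
  | TOr f g => tsat sys f r m \/ tsat sys g r m
  | TA f => forall r', sys r' -> (forall k, k <= m -> r' k = r k) -> tsat sys f r' m
  | TX f => tsat sys f r m.+1
  | TU f g => exists m', m <= m' /\ tsat sys g r m' /\
      forall k, m <= k < m' -> tsat sys f r k
  | TD G f => forall r' m', sys r' ->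
      (forall j, G j -> eqloc j (r m) (r' m')) -> tsat sys f r' m'
  | TC G f => forall r' m', sys r' ->
      clos_refl_trans (run E * nat)
        (fun x y => sys y.1 /\ exists j, G j /\ eqloc j (x.1 x.2) (y.1 y.2))
        (r, m) (r', m') ->
      tsat sys f r' m'
  end.

Definition tK (j : tidx) (f : tform) := TD (fun x => x = j) f.
Definition tBox (f : tform) := TNeg (TU TTrue (TNeg f)).
Definition agents_of (G : {set Ag}) : tidx -> Prop :=
  fun x => match x with ix_a i => i \in G | _ => False end.
Definition e_sig (G : {set Ag}) : tidx -> Prop :=
  fun x => match x with ix_e => True | ix_s i => i \in G | ix_a _ => False end.

Fixpoint transl (phi : atel) : tform :=
  match phi with
  | AP p => TP p
  | ANeg f => TNeg (transl f)
  | AOr f g => TOr (transl f) (transl g)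
  | ACX G f => TNeg (tK ix_e (TNeg (TD (e_sig G) (TX (transl f)))))
  | ACG G f => TNeg (tK ix_e (TNeg (TD (e_sig G) (tBox (transl f)))))
  | ACU G f g => TNeg (tK ix_e (TNeg (TD (e_sig G) (TU (transl f) (transl g)))))
  | AK i f => tK (ix_a i) (transl f)
  | AD G f => TD (agents_of G) (transl f)
  | AC G f => TC (agents_of G) (transl f)
  end.

End Defs.

From Pilot Require Import Defs.
From mathcomp Require Import all_boot zify.
From Stdlib Require Import Classical ClassicalEpsilon FunctionalExtensionality Relations.
Set Implicit Arguments. Unset Strict Implicit. Unset Printing Implicit Defensive.

(* The translation is correct because every translated formula is a state
   formula: its truth at a point (r, m) depends only on the environment state
   r_e(m).  For <<G>>, the epistemic operator D_{e, sigma(G)} quantifies over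
   all points that share the current state and the strategies of G; the
   strategies of the agents outside G are free there, and restrictability and
   extendability let us move between a strategy for exactly G and the full
   strategy of an arbitrary run.  The knowledge operators translate faithfully
   because in E[S/I] every state is the state of some point. *)

Arguments g_s {Ag Pr E} g i _ _.
Arguments Defs.comp {Ag Pr E} al i _ _.

Section PathFormulas.
Variables (Ag Pr : finType) (E : env Ag Pr) (sys : run E -> Prop).

Definition expresses (f : tform Ag Pr) (Q : St E -> Prop) :=
  forall r m, sys r -> (tsat sys f r m <-> Q (g_e (r m))).

Definition suffix (r : run E) (m : nat) : nat -> St E := fun k => g_e (r (m + k)).

Definition expresses_path (X : tform Ag Pr) (Psi : (nat -> St E) -> Prop) :=
  forall r m, sys r -> (tsat sys X r m <-> Psi (suffix r m)).

Lemma expresses_ext f Q Q' :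
  (forall s, Q s <-> Q' s) -> expresses f Q -> expresses f Q'.
Proof. by move=> QQ' fQ r m sys_r; rewrite -QQ'; exact: fQ. Qed.

Lemma expresses_path_X f Q :
  expresses f Q -> expresses_path (TX f) (fun rho => Q (rho 1)).
Proof. by move=> fQ r m sys_r; rewrite /= /suffix addn1; exact: fQ. Qed.

Lemma expresses_path_Box f Q :
  expresses f Q -> expresses_path (tBox f) (fun rho => forall k, Q (rho k)).
Proof.
move=> fQ r m sys_r /=; split=> [nofail k | allQ [m' [le_mm' [notf _]]]].
- apply/fQ => //; apply: NNPP => notf; apply: nofail.
  by exists (m + k); split; [exact: leq_addr | split].
- apply: notf; apply/fQ => //; rewrite -(subnKC le_mm'); exact: allQ.
Qed.

Lemma expresses_path_U f g Qf Qg :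
  expresses f Qf -> expresses g Qg ->
  expresses_path (TU f g)
    (fun rho => exists n, Qg (rho n) /\ forall k, k < n -> Qf (rho k)).
Proof.
move=> fQ gQ r m sys_r /=; split=> [[m' [le_mm' [gm' fbefore]]] | [n [gn fbefore]]].
- exists (m' - m); split; first by rewrite /suffix subnKC //; exact/gQ.
  by move=> k lt_kn; apply/fQ => //; apply: fbefore; apply/andP; split; lia.
- exists (m + n); split; [exact: leq_addr | split; first exact/gQ].
  move=> k /andP[le_mk lt_k]; apply/fQ => //; rewrite -(subnKC le_mk).
  by apply: fbefore; lia.
Qed.

End PathFormulas.

Section Strategies.
Variables (Ag Pr : finType) (E : env Ag Pr).
Implicit Types (al : gstrat E) (rho : nat -> St E) (G : {set Ag}).

Lemma comp_Some al i f : al i = Some f -> Defs.comp al i = f.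
Proof. by rewrite /Defs.comp => ->. Qed.

Lemma comp_restrict al G i : i \in G -> Defs.comp (restrict al G) i = Defs.comp al i.
Proof. by rewrite /Defs.comp /restrict => ->. Qed.

Lemma grp_restrict_sub al G : grp (restrict al G) \subset G.
Proof. by apply/subsetP => i; rewrite inE /restrict; case: ifP. Qed.

Lemma consistent_restrict al G rho : consistent al rho -> consistent (restrict al G) rho.
Proof.
move=> al_rho k; case: (al_rho k) => a [step allowed]; exists a; split=> // i f.
by rewrite /restrict; case: ifP => // _; exact: allowed.
Qed.

Lemma allowed_action_exists al (u : St E) :
  gstrat_ok al -> exists a : forall i, Act E i, forall i f, al i = Some f -> f u (a i).
Proof.
move=> al_ok.
have pick i : {x : Act E i | forall f, al i = Some f -> f u x}.
  apply: constructive_indefinite_description.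
  case al_i: (al i) => [f|]; last by case: (Act_ne E i) => x; exists x.
  by case: (al_ok i f al_i u) => x fx; exists x => _ [<-].
by exists (fun i => sval (pick i)) => i; exact: svalP (pick i).
Qed.

Lemma consistent_path_exists al (t : St E) :
  gstrat_ok al -> exists rho, rho 0 = t /\ consistent al rho.
Proof.
move=> al_ok.
have next u : {v | exists a, Trans u a v /\ forall i f, al i = Some f -> f u (a i)}.
  apply: constructive_indefinite_description.
  have [a allowed] := allowed_action_exists u al_ok.
  by have [v uav] := Trans_serial u a; exists v, a.
exists (fun k => iter k (fun u => sval (next u)) t); split=> // k.
by rewrite iterS; exact: (svalP (next _)).
Qed.

End Strategies.

Section StrategySpace.
Variables (Ag Pr : finType) (E : env Ag Pr) (Sigma : gstrat E -> Prop).
Hypothesis Sigma_ok : forall al, Sigma al -> gstrat_ok al.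
Hypothesis Sigma_ne : exists al, Sigma al.
Hypothesis Sigma_restr : restrictable Sigma.
Hypothesis Sigma_ext : extendable Sigma.

Local Notation E' := (@with_init _ _ E (fun _ => True)).
Local Notation sys := (stratspace Sigma).
Implicit Types (al : gstrat E) (rho : nat -> St E) (r : run E') (G : {set Ag}).

Lemma stratspace_strat r n i : sys r -> g_s (r n) i = g_s (r 0) i.
Proof.
case=> _ [_ r_ok]; elim: n => [//|n IHn].
by rewrite (proj2 (proj2 (r_ok n))) IHn.
Qed.

Lemma stratspace_obs r n i : sys r -> g_l (r n) i = obs i (g_e (r n)).
Proof. by case=> _ [_ r_ok]; exact: (proj1 (r_ok n)). Qed.

Lemma suffix_consistent r m al :
  sys r -> (forall i f, al i = Some f -> g_s (r m) i = f) -> consistent al (suffix r m).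
Proof.
move=> sys_r al_r k; have [_ [_ r_ok]] := sys_r.
have [a [step allowed]] := proj1 (proj2 (r_ok (m + k))).
exists a; split; first by rewrite /suffix addnS.
move=> i f al_i; rewrite -(al_r i f al_i) (stratspace_strat m i sys_r).
by rewrite -(stratspace_strat (m + k) i sys_r).
Qed.

Definition path_run al rho : run E' :=
  fun k => GS (E := E') (rho k) (fun i => obs i (rho k)) (Defs.comp al).

Lemma path_run_stratspace al rho : Sigma al -> consistent al rho -> sys (path_run al rho).
Proof.
move=> Sal al_rho; split=> //; split; first by exists al.
move=> m; split=> //; split=> //.
have [a [step allowed]] := al_rho m; exists a; split=> // j.
rewrite /= /Defs.comp; case al_j: (al j) => [f|] //; exact: allowed.
Qed.

Lemma point_exists (t : St E) : exists r, sys r /\ g_e (r 0) = t.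
Proof.
have [al Sal] := Sigma_ne.
have [rho [rho0 al_rho]] := consistent_path_exists t (Sigma_ok Sal).
by exists (path_run al rho); split=> //; exact: path_run_stratspace.
Qed.

Lemma Sigma_restrict al G : Sigma al -> Sigma (restrict al G).
Proof.
move=> Sal; have -> : restrict al G = restrict al (G :&: grp al).
  apply: functional_extensionality_dep => i; rewrite /restrict !inE.
  by case: (i \in G); case: (al i).
by apply: Sigma_restr => //; exact: subsetIr.
Qed.

Lemma extend_restriction al0 G : Sigma al0 -> exists al, Sigma al /\ grp al = G /\
  forall rho, consistent al rho -> consistent (restrict al0 G) rho.
Proof.
move=> Sal0; have [al [Sal [grp_al al_res]]] :=
  Sigma_ext (Sigma_restrict G Sal0) (grp_restrict_sub al0 G).
exists al; do 2 split=> //.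
by move=> rho /(consistent_restrict (grp (restrict al0 G))); rewrite al_res.
Qed.

Definition coal_tform (G : {set Ag}) (X : tform Ag Pr) : tform Ag Pr :=
  TNeg (tK (ix_e Ag) (TNeg (TD (e_sig G) X))).

Definition enforces (G : {set Ag}) (Psi : (nat -> St E) -> Prop) (s : St E) :=
  exists al, Sigma al /\ grp al = G /\ forall rho, rho 0 = s -> consistent al rho -> Psi rho.

(* A point agreeing with (r', m') on e and sigma(G) is obtained by running,
   from the current state, the restriction to G of the strategy of r'. *)
Lemma coal_tform_enforces G X Psi r m :
  expresses_path sys X Psi -> sys r -> tsat sys (coal_tform G X) r m -> enforces G Psi (g_e (r m)).
Proof.
move=> XPsi sys_r coal; apply: NNPP => not_enf; apply: coal => r' m' sys_r' same_e D_X.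
have [al0 [Sal0 al0_r']] := proj1 (proj2 sys_r').
have [al [Sal [grp_al al_al0]]] := extend_restriction G Sal0.
apply: not_enf; exists al; split=> //; split=> // rho rho0 al_rho.
have sys_run := path_run_stratspace (Sigma_restrict G Sal0) (al_al0 rho al_rho).
apply/(XPsi _ 0 sys_run); apply: (D_X _ 0 sys_run).
case=> [|//|i iG] /=; first by rewrite rho0 (same_e (ix_e Ag) erefl).
by rewrite comp_restrict // al0_r' (stratspace_strat m' i sys_r').
Qed.

Lemma enforces_coal_tform G X Psi r m :
  expresses_path sys X Psi -> sys r -> enforces G Psi (g_e (r m)) -> tsat sys (coal_tform G X) r m.
Proof.
move=> XPsi sys_r [al [Sal [grp_al al_Psi]]] not_coal.
have [rho [rho0 al_rho]] := consistent_path_exists (g_e (r m)) (Sigma_ok Sal).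
apply: (not_coal (path_run al rho) 0 (path_run_stratspace Sal al_rho)).
  by move=> j ->; rewrite /= rho0.
move=> r' m' sys_r' agree; apply/XPsi => //; apply: al_Psi.
  by rewrite /suffix addn0 -(agree (ix_e Ag) I) /= rho0.
apply: suffix_consistent => // i f al_i.
have iG : i \in G by rewrite -grp_al inE al_i.
by rewrite -(agree (ix_s i) iG) /= (comp_Some al_i).
Qed.

Lemma expresses_coal_tform G X Psi :
  expresses_path sys X Psi -> expresses sys (coal_tform G X) (enforces G Psi).
Proof.
move=> XPsi r m sys_r; split; [exact: coal_tform_enforces | exact: enforces_coal_tform].
Qed.

Lemma expresses_D (P : tidx Ag -> Prop) f Q :
  (forall j, P j -> exists i, j = ix_a i) -> expresses sys f Q ->
  expresses sys (TD P f)
    (fun s => forall t, (forall i, P (ix_a i) -> obs i s = obs i t) -> Q t).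
Proof.
move=> P_agents fQ r m sys_r; split=> [D_f t same_obs | allQ r' m' sys_r' agree].
- have [r' [sys_r' r'0]] := point_exists t; rewrite -r'0; apply/fQ => //.
  apply: D_f => // j Pj; have [i ji] := P_agents j Pj; subst j.
  by rewrite /= !stratspace_obs // r'0; exact: same_obs.
- apply/fQ => //; apply: allQ => i Pi.
  by have := agree _ Pi; rewrite /= !stratspace_obs.
Qed.

Definition obs_link (G : {set Ag}) (u v : St E) := exists i, i \in G /\ obs i u = obs i v.

Definition point_link (G : {set Ag}) (x y : run E' * nat) :=
  sys y.1 /\ exists j, agents_of G j /\ eqloc j (x.1 x.2) (y.1 y.2).

Lemma point_reach_state_reach G x y :
  clos_refl_trans _ (point_link G) x y -> sys x.1 ->
  clos_refl_trans _ (obs_link G) (g_e (x.1 x.2)) (g_e (y.1 y.2)).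
Proof.
move/clos_rt_rt1n_iff; elim=> [x0|x0 y0 z0 [sys_y0 [j [Gj eq_j]]] _ IH] sys_x0.
  exact: rt_refl.
apply: rt_trans (IH sys_y0); apply: rt_step.
case: j Gj eq_j => //= i iG eq_i; exists i; split=> //.
by rewrite -!stratspace_obs.
Qed.

Lemma state_reach_point_reach G u v :
  clos_refl_trans _ (obs_link G) u v -> forall r m, sys r -> g_e (r m) = u ->
  exists r' m', sys r' /\ g_e (r' m') = v /\ clos_refl_trans _ (point_link G) (r, m) (r', m').
Proof.
move/clos_rt_rt1n_iff; elim=> [u0|u0 w0 v0 [i [iG same_i]] _ IH] r m sys_r rmu.
  by exists r, m; do 2 split=> //; exact: rt_refl.
have [r1 [sys_r1 r10]] := point_exists w0.
have [r' [m' [sys_r' [r'v reach]]]] := IH r1 0 sys_r1 r10.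
exists r', m'; do 2 split=> //; apply: rt_trans reach; apply: rt_step.
split=> //; exists (ix_a i); split=> //=.
by rewrite !stratspace_obs // rmu r10.
Qed.

Lemma expresses_C G f Q :
  expresses sys f Q ->
  expresses sys (TC (agents_of G) f)
    (fun s => forall t, clos_refl_trans _ (obs_link G) s t -> Q t).
Proof.
move=> fQ r m sys_r; split=> [C_f t reach | allQ r' m' sys_r' reach].
- have [r' [m' [sys_r' [<- preach]]]] := state_reach_point_reach reach sys_r erefl.
  by apply/fQ => //; exact: C_f.
- by apply/fQ => //; apply: allQ; exact: (point_reach_state_reach reach sys_r).
Qed.

Lemma expresses_transl (phi : atel Ag Pr) : expresses sys (transl phi) (asat Sigma phi).
Proof.
elim: phi => [p|f IH|f IHf g IHg|G f IH|G f IH|G f IHf g IHg|i f IH|G f IH|G f IH].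
- by [].
- by move=> r m sys_r /=; split=> nf ff; apply: nf; exact/IH.
- by move=> r m sys_r /=; split=> -[ff|gg]; [left; exact/IHf|right; exact/IHg
                                           |left; exact/IHf|right; exact/IHg].
- exact/expresses_coal_tform/expresses_path_X.
- exact/expresses_coal_tform/expresses_path_Box.
- exact/expresses_coal_tform/expresses_path_U.
- apply: expresses_ext (expresses_D _ IH) => [s|j ->]; last by exists i.
  split=> [D_f t same_i | K_f t same_obs]; last exact: K_f t (same_obs i erefl).
  by apply: D_f => i' [->].
- by apply: expresses_D IH; case=> //= i _; exists i.
- exact: expresses_C.
Qed.

End StrategySpace.

Theorem mainTheorem10 (Ag Pr : finType) (E : env Ag Pr)
  (Sigma : gstrat E -> Prop)
  (Sigma_ok : forall al, Sigma al -> gstrat_ok al)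
  (Sigma_ne : exists al, Sigma al)
  (Sigma_restr : restrictable Sigma)
  (Sigma_ext : extendable Sigma) :
  forall (s : St E) (phi : atel Ag Pr),
    (asat Sigma phi s <->
       forall r m, stratspace Sigma r -> g_e (r m) = s ->
         tsat (stratspace Sigma) (transl phi) r m) /\
    (asat Sigma phi s <->
       exists r m, stratspace Sigma r /\ g_e (r m) = s /\
         tsat (stratspace Sigma) (transl phi) r m) /\
    (exists r m, stratspace Sigma r /\ g_e (r m) = s).
Proof.
move=> s phi.
have [r0 [sys_r0 r00]] := point_exists Sigma_ok Sigma_ne s.
have phiE := expresses_transl Sigma_ok Sigma_ne Sigma_restr Sigma_ext phi.
split; [|split; last by exists r0, 0].
- split=> [phi_s r m sys_r rms | phi_all]; first by apply/phiE; rewrite ?rms.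
  by rewrite -r00; apply/phiE => //; exact: phi_all.
- split=> [phi_s | [r [m [sys_r [rms phi_rm]]]]].
  + by exists r0, 0; do 2 split=> //; apply/phiE; rewrite ?r00.
  + by rewrite -rms; apply/phiE.
Qed.
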